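(* Let $\mathcal{H}_1,\mathcal{H}_2$ be Hilbert spaces and $T:\mathcal{D}(T)\subseteq\mathcal{H}_1\to\mathcal{H}_2$ a linear operator. Then $T^{\times}$ is boundedly invertible if and only if $T^{\times\times}$ is boundedly invertible. In particular, if $T$ is densely defined and closable, then $T^*$ is boundedly invertible if and only if $\overline{T}$ is boundedly invertible.
   Context: An operator $A:\mathcal{D}(A)\subseteq\mathcal{K}_1\to\mathcal{K}_2$ is boundedly invertible if there is a bounded operator $S:\mathcal{K}_2\to\mathcal{K}_1$ with $ASg=g$ for all $g\in\mathcal{K}_2$ and $SAf=f$ for all $f\in\mathcal{D}(A)$. Let $\mathcal{H}_T=\overline{\mathcal{D}(T)}$ and $T^{\times}:=(T|_{\mathcal{H}_T})^*$, the usual adjoint of $T$ regarded as a densely defined operator from $\mathcal{D}(T)\subseteq\mathcal{H}_T$ to $\mathcal{H}_2$; $T^\times$ is regarded as an operator from $\mathcal{H}_{T^\times}:=\overline{\mathcal{D}(T^\times)}$ into $\mathcal{H}_T$. Further $T^{\times\times}:=\big((T^{\times})|_{\mathcal{H}_{T^{\times}}}\big)^*$, an operator from (a domain in) $\mathcal{H}_T$ into $\mathcal{H}_{T^\times}$. *)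

(* Hilbert spaces over the complex numbers C := R[i]
   (R : realType) are modelled as complete normed C-modules whose norm is
   induced by an inner product (linear in the first argument, conjugate
   symmetric, <x,x> = ||x||^2).  Operators are partial maps with an explicit
   domain; closed subspaces K of a Hilbert space are represented as subsets. *)
From mathcomp Require Import all_boot all_order all_algebra.
From mathcomp Require Import all_classical all_reals all_analysis.
From mathcomp Require Export complex.
Export numFieldNormedType.Exports.

Set Implicit Arguments.
Unset Strict Implicit.
Unset Printing Implicit Defensive.

Import Order.TTheory GRing.Theory Num.Theory.
Local Open Scope ring_scope.
Local Open Scope classical_set_scope.

Section Hilbert.
Variable R : realType.
Local Notation C := (R[i]).

Definition is_inner_product (H : completeNormedModType C) (ip : H -> H -> C) : Prop :=
  [/\ (forall (a : C) (x y z : H), ip (a *: x + y) z = a * ip x z + ip y z),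
      (forall x y : H, ip x y = Num.conj (ip y x)) &
      (forall x : H, ip x x = `|x| ^+ 2)].

Record operator (H1 H2 : completeNormedModType C) := Operator {
  dom : set H1;
  op : H1 -> H2 }.

Definition linear_operator (H1 H2 : completeNormedModType C) (T : operator H1 H2) : Prop :=
  [/\ dom T 0,
      (forall (a : C) (x y : H1), dom T x -> dom T y -> dom T (a *: x + y)) &
      (forall (a : C) (x y : H1), dom T x -> dom T y ->
          op T (a *: x + y) = a *: op T x + op T y)].

(* Adjoint of A : D(A) ⊆ K1 -> K2 (K1, K2 closed subspaces of H1, H2, D(A)
   dense in K1), as an operator D(A^* ) ⊆ K2 -> K1:
   D(A^* ) = {y in K2 | exists z in K1, forall x in D(A), <Ax,y> = <x,z>},
   A^* y = that (unique) z. *)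
Definition adjoint (H1 H2 : completeNormedModType C)
    (ip1 : H1 -> H1 -> C) (ip2 : H2 -> H2 -> C)
    (K1 : set H1) (K2 : set H2) (A : operator H1 H2) : operator H2 H1 :=
  let P y := [set z : H1 | K1 z /\ forall x, dom A x -> ip2 (op A x) y = ip1 x z] in
  Operator [set y : H2 | K2 y /\ exists z, P y z] (fun y => xget 0 (P y)).

Definition HT (H1 H2 : completeNormedModType C) (T : operator H1 H2) : set H1 :=
  closure (dom T).

(* T^× = (T|_{H_T})^* : D(T^×) ⊆ H2 -> H_T *)
Definition Tx (H1 H2 : completeNormedModType C)
    (ip1 : H1 -> H1 -> C) (ip2 : H2 -> H2 -> C) (T : operator H1 H2) : operator H2 H1 :=
  adjoint ip1 ip2 (HT T) setT T.

(* T^×× = ((T^×)|_{H_{T^×}})^* : D(T^××) ⊆ H_T -> H_{T^×} *)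
Definition Txx (H1 H2 : completeNormedModType C)
    (ip1 : H1 -> H1 -> C) (ip2 : H2 -> H2 -> C) (T : operator H1 H2) : operator H1 H2 :=
  adjoint ip2 ip1 (HT (Tx ip1 ip2 T)) (HT T) (Tx ip1 ip2 T).

Definition Tstar (H1 H2 : completeNormedModType C)
    (ip1 : H1 -> H1 -> C) (ip2 : H2 -> H2 -> C) (T : operator H1 H2) : operator H2 H1 :=
  adjoint ip1 ip2 setT setT T.

Definition boundedly_invertible (H1 H2 : completeNormedModType C)
    (K1 : set H1) (K2 : set H2) (A : operator H1 H2) : Prop :=
  exists S : H2 -> H1,
    [/\ (forall g, K2 g -> K1 (S g)),
        (forall (a : C) (g h : H2), K2 g -> K2 h -> S (a *: g + h) = a *: S g + S h),
        (exists c : C, 0 <= c /\ forall g, K2 g -> `|S g| <= c * `|g|),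
        (forall g, K2 g -> dom A (S g) /\ op A (S g) = g) &
        (forall f, dom A f -> S (op A f) = f)].

Definition densely_defined (H1 H2 : completeNormedModType C) (T : operator H1 H2) : Prop :=
  closure (dom T) = setT.

Definition graph (H1 H2 : completeNormedModType C) (T : operator H1 H2) : set (H1 * H2) :=
  [set p | dom T p.1 /\ p.2 = op T p.1].

(* T closable: the closure of its graph is the graph of an operator *)
Definition closable (H1 H2 : completeNormedModType C) (T : operator H1 H2) : Prop :=
  forall y : H2, closure (graph T) (0, y) -> y = 0.

Definition op_closure (H1 H2 : completeNormedModType C) (T : operator H1 H2) : operator H1 H2 :=
  Operator [set x | exists y, closure (graph T) (x, y)]
           (fun x => xget 0 [set y | closure (graph T) (x, y)]).

End Hilbert.

(* If S is a bounded inverse of A, the Riesz representation theorem turns S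
   into a bounded S' with <u, S' g> = <S u, g>, and S' inverts the adjoint of A;
   applied to A = T^x this shows that T^xx is boundedly invertible when T^x is.
   Conversely, for x in D(T) the vector T^xx x is the orthogonal projection of
   T x onto H_{T^x}, so the same construction applied to a bounded inverse of
   T^xx inverts T^x.
   For T densely defined and closable, T^* is also the adjoint of the closure
   of T, which gives one direction of the second equivalence.  For the other,
   a bounded inverse of T^* yields |x| <= c |y| on the closed graph of T and
   forces the range of T to be dense; completeness then makes the closure of T
   onto, and its inverse is bounded by c. *)

From mathcomp Require Import all_boot all_order all_algebra.
From mathcomp Require Import all_classical all_reals all_analysis.
From mathcomp Require Import ring lra.
Import numFieldNormedType.Exports.
Import Order.TTheory GRing.Theory Num.Theory.
Set Implicit Arguments.
Unset Strict Implicit.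
Unset Printing Implicit Defensive.
Local Open Scope ring_scope.
Local Open Scope classical_set_scope.

Section NormedFacts.
Variable R : realType.
Local Notation C := R[i].

Lemma closure_normP (V : normedModType C) (A : set V) p :
  closure A p <-> forall e : C, 0 < e -> exists2 a, A a & `|p - a| < e.
Proof.
split.
  move=> cl e e0; have [a [Aa]] := cl _ (nbhsx_ballx p e e0).
  by rewrite -ball_normE /= => h; exists a.
move=> h B /nbhs_ballP [e /= e0 sub]; have [a Aa pa] := h e e0.
by exists a; split=> //; apply: sub; rewrite -ball_normE.
Qed.

Lemma closure_prodP (U V : normedModType C) (A : set (U * V)) x y :
  closure A (x, y) <-> forall e : C, 0 < e ->
    exists2 q, A q & `|x - q.1| < e /\ `|y - q.2| < e.
Proof.
split.
  move=> cl e e0; have [q [Aq [h1 h2]]] := cl _ (nbhsx_ballx (x, y) e e0).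
  by exists q => //; move: h1 h2; rewrite -!ball_normE.
move=> h B /nbhs_ballP [e /= e0 sub]; have [q Aq [h1 h2]] := h e e0.
by exists q; split=> //; apply: sub; split; rewrite -ball_normE.
Qed.

Lemma norm_le_eps_eq0 (z K : C) :
  0 <= K -> (forall e : C, 0 < e -> `|z| <= e * K) -> z = 0.
Proof.
move=> K0 h; apply/eqP; apply: contraT => z0.
have K1 : 0 < K + 1 by rewrite ltr_wpDl.
have := h (`|z| / (K + 1)); rewrite divr_gt0 ?normr_gt0 // => /(_ isT).
rewrite mulrAC ler_pdivlMr // mulrDr mulr1 gerDl.
by rewrite normr_le0 (negbTE z0).
Qed.

Lemma le_of_sqr_le_mul (n K : C) : 0 <= n -> 0 <= K -> n ^+ 2 <= K * n -> n <= K.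
Proof.
move=> n0 K0 h; have [->|nn0] := eqVneq n 0; first by [].
have np : 0 < n by rewrite lt_def nn0 n0.
by rewrite -(ler_pM2r np) -expr2.
Qed.

Definition lin_subspace {V : lmodType C} (A : set V) :=
  A 0 /\ forall a x y, A x -> A y -> A (a *: x + y).

Lemma lin_subspaceT (V : lmodType C) : lin_subspace [set: V].
Proof. by []. Qed.

Lemma lin_subspace0 (V : lmodType C) (A : set V) : lin_subspace A -> A 0.
Proof. by case. Qed.

Lemma lin_subspaceD (V : lmodType C) (A : set V) x y :
  lin_subspace A -> A x -> A y -> A (x + y).
Proof. by case=> _ h Ax Ay; rewrite -[x]scale1r; apply: h. Qed.

Lemma lin_subspaceZ (V : lmodType C) (A : set V) a x :
  lin_subspace A -> A x -> A (a *: x).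
Proof. by case=> h0 h Ax; rewrite -[_ *: _]addr0; apply: h. Qed.

Lemma lin_subspaceB (V : lmodType C) (A : set V) x y :
  lin_subspace A -> A x -> A y -> A (x - y).
Proof.
by move=> sA Ax Ay; rewrite -scaleN1r; apply: lin_subspaceD => //; apply: lin_subspaceZ.
Qed.

Lemma closure_lin_subspace (V : normedModType C) (A : set V) :
  lin_subspace A -> lin_subspace (closure A).
Proof.
move=> sA; split; first exact: subset_closure (lin_subspace0 sA).
move=> a x y /closure_normP cx /closure_normP cy; apply/closure_normP => e e0.
have k0 : 0 < `|a| + 1 by rewrite ltr_wpDl.
have e2 : 0 < e / 2 by rewrite divr_gt0.
have [x' Ax' hx] := cx (e / 2 / (`|a| + 1)) (divr_gt0 e2 k0).
have [y' Ay' hy] := cy (e / 2) e2.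
exists (a *: x' + y'); first by case: sA => _; apply.
have -> : a *: x + y - (a *: x' + y') = a *: (x - x') + (y - y').
  by rewrite scalerBr opprD addrACA.
apply: (le_lt_trans (ler_normD _ _)); rewrite normrZ.
rewrite [e]splitr ltr_leD //; last exact: ltW.
have : `|a| * `|x - x'| <= (`|a| + 1) * `|x - x'| by rewrite ler_wpM2r // lerDl.
by move/le_lt_trans; apply; rewrite mulrC -ltr_pdivlMr.
Qed.

Lemma nested_family_limit (V : completeNormedModType C) (A : R -> set V) :
  (forall r, 0 < r -> A r !=set0) ->
  (forall r s, 0 < r -> r <= s -> A r `<=` A s) ->
  (forall eps : C, 0 < eps -> exists2 r, 0 < r &
     forall u v, A r u -> A r v -> `|u - v| < eps) ->
  exists p : V, forall eps : C, 0 < eps -> exists2 r, 0 < r &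
     forall u, A r u -> `|p - u| < eps.
Proof.
move=> ne mono cau.
pose F := filter_from [set r : R | 0 < r] A.
have FF : ProperFilter F.
  apply: filter_from_proper; last by move=> r /ne.
  apply: filter_from_filter; first by exists 1; rewrite /= ltr01.
  move=> r s /= r0 s0; exists (Num.min r s); first by rewrite /= lt_min r0 s0.
  by move=> x Ax; split; apply: (mono (Num.min r s)) Ax;
    rewrite ?lt_min ?r0 ?s0 // ge_min lexx ?orbT.
have cF : cauchy F.
  apply: cauchy_exP => eps eps0; have [r r0 h] := cau eps eps0.
  have [u Au] := ne r r0; exists u; exists r => //= v Av.
  by rewrite -ball_normE /=; apply: h.
have Fp : F --> lim F by apply: cauchy_cvg.
exists (lim F) => eps eps0.
have [r r0 sub] : F (ball (lim F) eps) by apply: Fp; apply: nbhsx_ballx.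
by exists r => // u Au; have := sub u Au; rewrite -ball_normE.
Qed.

Lemma gtC0_real (e : C) : 0 < e -> exists2 r : R, 0 < r & e = r%:C%C.
Proof.
move=> e0; exists (complex.Re e); last by rewrite RRe_real // ger0_real // ltW.
by rewrite -ltcR RRe_real // ger0_real // ltW.
Qed.

Section BoundedFunctional.
Variables (V : normedModType C) (K : set V) (f : V -> C) (c : C).
Hypotheses (sK : lin_subspace K) (c0 : 0 <= c).
Hypothesis f_lin : forall a u v, K u -> K v -> f (a *: u + v) = a * f u + f v.
Hypothesis f_bounded : forall u, K u -> `|f u| <= c * `|u|.

Lemma bounded_functional0 : f 0 = 0.
Proof.
apply/eqP; rewrite -normr_le0.
by apply: le_trans (f_bounded (lin_subspace0 sK)) _; rewrite normr0 mulr0.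
Qed.

Lemma bounded_functionalZ a u : K u -> f (a *: u) = a * f u.
Proof.
move=> Ku; rewrite -[a *: u]addr0 f_lin ?bounded_functional0 ?addr0 //.
exact: lin_subspace0.
Qed.

Lemma bounded_functionalB u v : K u -> K v -> f (u - v) = f u - f v.
Proof. by move=> Ku Kv; rewrite addrC -scaleN1r f_lin // mulN1r addrC. Qed.

Lemma kernel_lin_subspace : lin_subspace [set u | K u /\ f u = 0].
Proof.
split; first by split; [exact: lin_subspace0 | exact: bounded_functional0].
move=> a x y [Kx fx] [Ky fy]; split; first by case: sK => _; apply.
by rewrite f_lin // fx fy mulr0 addr0.
Qed.

Lemma kernel_closed : closed K -> closed [set u | K u /\ f u = 0].
Proof.
move=> cK u /closure_normP cu.
have Ku : K u.
  by apply: cK; apply/closure_normP => e /cu [v [Kv _] h]; exists v.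
split=> //; apply: (@norm_le_eps_eq0 _ c) => // e e0.
have [v [Kv fv] h] := cu e e0.
rewrite -[f u]subr0 -fv -bounded_functionalB //.
apply: le_trans (f_bounded (lin_subspaceB sK Ku Kv)) _.
by rewrite mulrC ler_wpM2r // ltW.
Qed.

End BoundedFunctional.

End NormedFacts.

(** * Orthogonal projection and Riesz representation *)

Section InnerProduct.
Variable R : realType.
Local Notation C := R[i].
Variables (H : completeNormedModType C) (ip : H -> H -> C).
Hypothesis hip : is_inner_product ip.

Lemma ip_lin a x y z : ip (a *: x + y) z = a * ip x z + ip y z.
Proof. by case: hip. Qed.
Lemma ipC x y : ip x y = (ip y x)^*.
Proof. by case: hip. Qed.
Lemma ipxx x : ip x x = `|x| ^+ 2.
Proof. by case: hip. Qed.

Lemma ip0l z : ip 0 z = 0.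
Proof.
have := ip_lin 1 0 0 z; rewrite scaler0 addr0 mul1r -{1}[ip 0 z]addr0.
by move=> /addrI.
Qed.
Lemma ipDl x y z : ip (x + y) z = ip x z + ip y z.
Proof. by rewrite -[x in LHS]scale1r ip_lin mul1r. Qed.
Lemma ipZl a x z : ip (a *: x) z = a * ip x z.
Proof. by rewrite -[a *: x]addr0 ip_lin ip0l addr0. Qed.
Lemma ipBl x y z : ip (x - y) z = ip x z - ip y z.
Proof. by rewrite ipDl -(scaleN1r y) ipZl mulN1r. Qed.
Lemma ipDr z x y : ip z (x + y) = ip z x + ip z y.
Proof. by rewrite ipC ipDl rmorphD /= -!ipC. Qed.
Lemma ipZr z a x : ip z (a *: x) = a^* * ip z x.
Proof. by rewrite ipC ipZl rmorphM /= -ipC. Qed.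
Lemma ip0r z : ip z 0 = 0.
Proof. by rewrite ipC ip0l conjC0. Qed.
Lemma ipBr z x y : ip z (x - y) = ip z x - ip z y.
Proof. by rewrite ipC ipBl rmorphB /= -!ipC. Qed.

Lemma ip_eq0 x : ip x x = 0 -> x = 0.
Proof. by rewrite ipxx => /eqP; rewrite expf_eq0 /= normr_eq0 => /eqP. Qed.

Lemma cauchy_schwarz x y : `|ip x y| <= `|x| * `|y|.
Proof.
have [->|y0] := eqVneq y 0; first by rewrite ip0r !normr0 mulr0.
set n := `|y| ^+ 2; set a := ip x y.
have n0 : n != 0 by rewrite sqrf_eq0 normr_eq0.
have nc : n^* = n by apply: geC0_conj; rewrite exprn_ge0.
(* expand 0 <= |x - (a / n) y|^2 *)
have := ipxx (x - (a / n) *: y).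
rewrite ipBl !ipBr !ipZl !ipZr !ipxx -/n (ipC y x) -/a rmorphM /= fmorphV /= nc.
have -> : `|x| ^+ 2 - a^* / n * a - (a / n * a^* - a / n * (a^* / n * n)) =
          `|x| ^+ 2 - a * a^* / n by field.
move=> e; have := exprn_ge0 2 (normr_ge0 (x - (a / n) *: y)); rewrite -e.
rewrite -normCK subr_ge0 ler_pdivrMr; last by rewrite lt_def n0 exprn_ge0.
rewrite -exprMn => h.
by rewrite -(@ler_pXn2r _ 2) // nnegrE ?mulr_ge0.
Qed.

Lemma closure_orth (D : set H) w z :
  (forall x, D x -> ip x w = 0) -> closure D z -> ip z w = 0.
Proof.
move=> hD /closure_normP cz; apply: (@norm_le_eps_eq0 _ _ `|w|) => // e e0.
have [a Da h] := cz e e0.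
rewrite -[z](subrK a) ipDl (hD a Da) addr0.
by apply: le_trans (cauchy_schwarz _ _) _; rewrite ler_wpM2r // ltW.
Qed.

Lemma closure_ipr_inj (D : set H) z1 z2 :
  closure D z1 -> closure D z2 -> (forall x, D x -> ip x z1 = ip x z2) -> z1 = z2.
Proof.
move=> c1 c2 h.
have hD x : D x -> ip x (z1 - z2) = 0 by move=> Dx; rewrite ipBr h // subrr.
apply/eqP; rewrite -subr_eq0; apply/eqP; apply: ip_eq0.
by rewrite ipBl !(closure_orth hD) // subrr.
Qed.

Lemma sqr_normB_scale_ip w m (s : C) : s^* = s ->
  `|w - (s * ip w m) *: m| ^+ 2 = `|w| ^+ 2 + s * `|ip w m| ^+ 2 * (s * `|m| ^+ 2 - 2).
Proof.
move=> sc; rewrite -!ipxx !(ipBl, ipBr, ipZl, ipZr) (ipC m w) rmorphM /= sc.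
by rewrite normCK; ring.
Qed.

Lemma min_dist_orth (M : set H) x p : lin_subspace M -> M p ->
  (forall m, M m -> `|x - p| <= `|x - m|) -> forall m, M m -> ip (x - p) m = 0.
Proof.
move=> sM Mp pmin m Mm; set N := `|m| ^+ 2; set s := (1 + N)^-1.
have N0 : 0 <= N by rewrite exprn_ge0.
have s0 : 0 < s by rewrite invr_gt0 ltr_pwDl.
have sN : s * N - 2 < 0.
  rewrite subr_lt0 mulrC ltr_pdivrMr ?ltr_pwDl //.
  apply: lt_le_trans (ltr_pwDl ltr01 (lexx N)) _.
  by rewrite ler_peMl ?ler1n // addr_ge0.
have : `|x - p| ^+ 2 <= `|x - p - (s * ip (x - p) m) *: m| ^+ 2.
  rewrite (@ler_pXn2r _ 2) // ?nnegrE // -addrA -opprD.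
  by apply: pmin; apply: lin_subspaceD sM Mp (lin_subspaceZ _ sM Mm).
rewrite sqr_normB_scale_ip; last exact/geC0_conj/ltW.
rewrite lerDl nmulr_lge0 // pmulr_rle0 //.
by move=> a0; apply/eqP; rewrite -normr_eq0 -sqrf_eq0 eq_le a0 exprn_ge0.
Qed.

Definition rnorm (x : H) : R := complex.Re `|x|.

Lemma rnormE x : `|x| = (rnorm x)%:C%C.
Proof. by rewrite /rnorm RRe_real // ger0_real. Qed.

Lemma rnorm_ge0 x : 0 <= rnorm x.
Proof. by rewrite -(lecR 0) -rnormE; apply: normr_ge0. Qed.

Lemma rnormN x : rnorm (- x) = rnorm x.
Proof. by rewrite /rnorm normrN. Qed.

Lemma rnorm_dist x y z : rnorm (x - z) <= rnorm (x - y) + rnorm (y - z).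
Proof. by rewrite -lecR rmorphD /= -!rnormE ler_distD. Qed.

Lemma rnormMn x n : rnorm (x *+ n) = rnorm x *+ n.
Proof. by apply: complexI; rewrite rmorphMn /= -!rnormE normrMn. Qed.

Lemma parallelogram u v :
  rnorm (u + v) ^+ 2 + rnorm (u - v) ^+ 2 = 2 * rnorm u ^+ 2 + 2 * rnorm v ^+ 2.
Proof.
have e : ip (u + v) (u + v) + ip (u - v) (u - v) = 2 * ip u u + 2 * ip v v.
  by rewrite !ipBl !ipBr !ipDl !ipDr; ring.
apply: complexI; move: e; rewrite !ipxx !rnormE -!rmorphXn.
by rewrite !rmorphD /= !rmorphM /= !rmorph_nat.
Qed.

Lemma min_dist_cauchy (M : set H) x d : lin_subspace M -> 0 <= d ->
  (forall m, M m -> d <= rnorm (x - m)) ->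
  forall eps : C, 0 < eps -> exists2 r, 0 < r & forall u v, M u -> M v ->
    rnorm (x - u) < d + r -> rnorm (x - v) < d + r -> `|u - v| < eps.
Proof.
move=> sM d0 dle _ /gtC0_real [e e0 ->].
pose r := Num.min 1 (e ^+ 2 / (4 * (2 * d + 1))).
have d1 : 0 < 4 * (2 * d + 1) by lra.
have r0 : 0 < r by rewrite lt_min ltr01 divr_gt0 // exprn_gt0.
have r1 : r <= 1 by rewrite ge_min lexx.
have re : r * (4 * (2 * d + 1)) <= e ^+ 2 by rewrite -ler_pdivlMr // ge_min lexx orbT.
exists r => // u v Mu Mv hu hv; rewrite rnormE ltcR.
(* parallelogram law for x - u, x - v; their midpoint is at distance >= d from x *)
set mid := 2^-1 *: (u + v).
have := dle mid (lin_subspaceZ _ sM (lin_subspaceD sM Mu Mv)).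
have := parallelogram (x - u) (x - v).
have -> : x - u + (x - v) = (x - mid) *+ 2.
  rewrite mulrnBl -(scaler_nat 2 mid) /mid scalerA divff ?pnatr_eq0 // scale1r.
  by rewrite mulr2n opprD addrACA.
rewrite rnormMn (_ : x - u - (x - v) = - (u - v)); last first.
  by rewrite opprB addrC addrA subrK opprB.
rewrite rnormN => par dmid.
have : rnorm (u - v) ^+ 2 < 4 * r * (2 * d + r).
  by have := rnorm_ge0 (x - u); have := rnorm_ge0 (x - v); nra.
by have := rnorm_ge0 (u - v); nra.
Qed.

Lemma exists_min_dist (M : set H) x : lin_subspace M -> closed M ->
  exists2 p, M p & forall m, M m -> `|x - p| <= `|x - m|.
Proof.
move=> sM cM; pose E := [set rnorm (x - m) | m in M].
have hE : has_inf E.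
  split; first by exists (rnorm (x - 0)), 0 => //; apply: lin_subspace0.
  by exists 0 => _ [m _ <-]; apply: rnorm_ge0.
set d := inf E.
have dle m : M m -> d <= rnorm (x - m) by move=> Mm; apply: ge_inf hE.2 _ _; exists m.
have d0 : 0 <= d by apply: lb_le_inf hE.1 _ => _ [m _ <-]; apply: rnorm_ge0.
pose A r := [set m | M m /\ rnorm (x - m) < d + r].
have Ane r : 0 < r -> A r !=set0.
  by move=> /inf_adherent /(_ hE) [_ [m Mm <-] h]; exists m.
have [p hp] : exists p, forall eps : C, 0 < eps -> exists2 r, 0 < r &
    forall u, A r u -> `|p - u| < eps.
  apply: (nested_family_limit Ane).
    move=> r s r0 rs m; rewrite /A /= => -[Mm h].
    by split => //; apply: lt_le_trans h _; rewrite lerD2l.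
  move=> eps /(min_dist_cauchy sM d0 dle) [r r0 h].
  by exists r => // u v [Mu hu] [Mv hv]; apply: h.
have Mp : M p.
  apply: cM; apply/closure_normP => e /hp [r r0 h].
  by have [u Au] := Ane r r0; exists u; [case: Au | apply: h].
have pd : rnorm (x - p) <= d.
  apply/ler_addgt0Pr => e e0; have e2 : 0 < e / 2 by rewrite divr_gt0.
  have [r r0 h] : exists2 r, 0 < r & forall u, A r u -> `|p - u| < (e / 2)%:C%C.
    by apply: hp; rewrite ltcR.
  have [u [Mu hu]] : A (Num.min r (e / 2)) !=set0 by apply: Ane; rewrite lt_min r0 e2.
  have xu : rnorm (x - u) < d + e / 2.
    by apply: lt_le_trans hu _; rewrite lerD2l ge_min lexx orbT.
  have pu : rnorm (p - u) < e / 2.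
    rewrite -ltcR -rnormE; apply: h; split => //.
    by apply: lt_le_trans hu _; rewrite lerD2l ge_min lexx.
  have := rnorm_dist x u p; rewrite -(rnormN (u - p)) opprB.
  lra.
exists p => // m Mm; rewrite !rnormE lecR.
exact: le_trans pd (dle m Mm).
Qed.

Lemma orthogonal_projection (M : set H) x : lin_subspace M -> closed M ->
  exists2 p, M p & forall m, M m -> ip (x - p) m = 0.
Proof.
move=> sM cM; have [p Mp pmin] := exists_min_dist x sM cM.
by exists p => //; apply: min_dist_orth.
Qed.

Lemma riesz_representation (K : set H) (f : H -> C) (c : C) :
  lin_subspace K -> closed K -> 0 <= c ->
  (forall a u v, K u -> K v -> f (a *: u + v) = a * f u + f v) ->
  (forall u, K u -> `|f u| <= c * `|u|) ->
  exists2 y, K y & forall u, K u -> f u = ip u y.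
Proof.
move=> sK cK c0 f_lin f_bd.
have [f_vanish|] := pselect (forall u, K u -> f u = 0).
  by exists 0 => [|u Ku]; [exact: lin_subspace0 | rewrite ip0r f_vanish].
move=> /existsNP [u0 /not_implyP [Ku0 /eqP fu0]].
have [p [Kp fp] hp] := orthogonal_projection u0
  (kernel_lin_subspace sK f_lin f_bd) (kernel_closed sK c0 f_lin f_bd cK).
set v := u0 - p.
have Kv : K v by apply: lin_subspaceB.
have fv : f v != 0 by rewrite (bounded_functionalB f_lin) // fp subr0.
have nv : `|v| != 0.
  by rewrite normr_eq0; apply: contraNneq fv => ->; rewrite (bounded_functional0 sK f_bd).
exists ((f v)^* / `|v| ^+ 2 *: v) => [|u Ku]; first exact: lin_subspaceZ.
have ker_w : ip (u - (f u / f v) *: v) v = 0.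
  rewrite ipC hp ?conjC0 //; split.
    by apply: lin_subspaceB => //; apply: lin_subspaceZ.
  rewrite (bounded_functionalB f_lin) //; last exact: lin_subspaceZ.
  by rewrite (bounded_functionalZ sK f_lin f_bd) // mulfVK // subrr.
have uv : ip u v = f u / f v * `|v| ^+ 2.
  by apply/eqP; move/eqP: ker_w; rewrite ipBl ipZl ipxx subr_eq0.
rewrite ipZr uv rmorphM /= conjCK fmorphV /= (@geC0_conj _ (`|v| ^+ 2)) ?exprn_ge0 //.
by field; rewrite fv nv.
Qed.

End InnerProduct.

(** * Adjoints of boundedly invertible operators *)

Section Adjoint.
Variable R : realType.
Local Notation C := R[i].
Variables (Ha Hb : completeNormedModType C) (ipa : Ha -> Ha -> C) (ipb : Hb -> Hb -> C).
Hypotheses (hipa : is_inner_product ipa) (hipb : is_inner_product ipb).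

Lemma bounded_adjoint (K : set Hb) (S : Hb -> Ha) (c : C) :
  lin_subspace K -> closed K -> 0 <= c ->
  (forall a u v, K u -> K v -> S (a *: u + v) = a *: S u + S v) ->
  (forall u, K u -> `|S u| <= c * `|u|) ->
  exists S' : Ha -> Hb, [/\ forall g, K (S' g),
     forall g u, K u -> ipb u (S' g) = ipa (S u) g,
     forall a g h, S' (a *: g + h) = a *: S' g + S' h &
     forall g, `|S' g| <= c * `|g|].
Proof.
move=> sK cK c0 S_lin S_bd.
have adj g : exists y, K y /\ forall u, K u -> ipb u y = ipa (S u) g.
  have f_lin a u v : K u -> K v ->
      ipa (S (a *: u + v)) g = a * ipa (S u) g + ipa (S v) g.
    by move=> Ku Kv; rewrite S_lin // (ipDl hipa) (ipZl hipa).
  have f_bd u : K u -> `|ipa (S u) g| <= c * `|g| * `|u|.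
    move=> Ku; apply: le_trans (cauchy_schwarz hipa _ _) _.
    by rewrite mulrAC ler_wpM2r // S_bd.
  have [y Ky hy] :=
    riesz_representation hipb sK cK (mulr_ge0 c0 (normr_ge0 g)) f_lin f_bd.
  by exists y; split => // u Ku; rewrite hy.
have [S' S'P] := choice adj.
have S'_uniq g y : K y -> (forall u, K u -> ipb u y = ipa (S u) g) -> S' g = y.
  move=> Ky hy; have [KS hS] := S'P g.
  apply: (closure_ipr_inj hipb (D := K)); try exact: subset_closure.
  by move=> u Ku; rewrite hS // hy.
exists S'; split => [g|g|a g h|g]; have [KSg hSg] := S'P g.
- exact: KSg.
- exact: hSg.
- have [KSh hSh] := S'P h; apply: S'_uniq => [|u Ku].
    by apply: lin_subspaceD => //; apply: lin_subspaceZ.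
  by rewrite (ipDr hipb) (ipZr hipb) (ipDr hipa) (ipZr hipa) hSg // hSh.
- have e : `|S' g| ^+ 2 = `|ipa (S (S' g)) g|.
    by rewrite -hSg // (ipxx hipb) ger0_norm // exprn_ge0.
  apply: le_of_sqr_le_mul => //; first by rewrite mulr_ge0.
  rewrite e; apply: le_trans (cauchy_schwarz hipa _ _) _.
  by rewrite mulrAC ler_wpM2r // S_bd.
Qed.

Lemma adjoint_spec (K1 : set Ha) (K2 : set Hb) (A : operator Ha Hb) y :
  dom (adjoint ipa ipb K1 K2 A) y ->
  [/\ K2 y, K1 (op (adjoint ipa ipb K1 K2 A) y) &
     forall x, dom A x -> ipb (op A x) y = ipa x (op (adjoint ipa ipb K1 K2 A) y)].
Proof. by case=> K2y ex; have [] := xgetPex 0 ex. Qed.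

Lemma adjoint_dom_lin_subspace (K1 : set Ha) (K2 : set Hb) (A : operator Ha Hb) :
  lin_subspace K1 -> lin_subspace K2 -> lin_subspace (dom (adjoint ipa ipb K1 K2 A)).
Proof.
move=> sK1 sK2; split.
  split; first exact: lin_subspace0.
  exists 0; split=> [|x _]; first exact: lin_subspace0.
  by rewrite (ip0r hipb) (ip0r hipa).
move=> a y1 y2 /adjoint_spec [K2y1 K1z1 h1] /adjoint_spec [K2y2 K1z2 h2].
split; first by case: sK2 => _; apply.
exists (a *: op (adjoint ipa ipb K1 K2 A) y1 + op (adjoint ipa ipb K1 K2 A) y2).
split=> [|x Ax]; first by case: sK1 => _; apply.
by rewrite (ipDr hipb) (ipZr hipb) h1 // h2 // (ipDr hipa) (ipZr hipa).
Qed.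

Lemma eq_adjoint (K1 : set Ha) (K2 : set Hb) (A B : operator Ha Hb) :
  (forall y z, (forall x, dom A x -> ipb (op A x) y = ipa x z) <->
               (forall x, dom B x -> ipb (op B x) y = ipa x z)) ->
  adjoint ipa ipb K1 K2 A = adjoint ipa ipb K1 K2 B.
Proof.
move=> AB; rewrite /adjoint.
have E y : [set z | K1 z /\ forall x, dom A x -> ipb (op A x) y = ipa x z] =
           [set z | K1 z /\ forall x, dom B x -> ipb (op B x) y = ipa x z].
  by apply/seteqP; split => z [K1z h]; split => //; apply/AB.
congr Operator; last by apply/funext => y; rewrite E.
by apply/seteqP; split => y [K2y [z hz]]; split => //; exists z; rewrite ?E // -E.
Qed.

Lemma adjoint_char (K2 : set Hb) (A : operator Ha Hb) y z :
  K2 y -> closure (dom A) z -> (forall x, dom A x -> ipb (op A x) y = ipa x z) ->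
  dom (adjoint ipa ipb (closure (dom A)) K2 A) y /\
  op (adjoint ipa ipb (closure (dom A)) K2 A) y = z.
Proof.
move=> K2y cz hz; have yA : dom (adjoint ipa ipb (closure (dom A)) K2 A) y.
  by split => //; exists z.
split => //; have [_ cA hA] := adjoint_spec yA.
by apply: (closure_ipr_inj hipa cA cz) => x Ax; rewrite -hA // hz.
Qed.

Lemma adjoint_boundedly_invertible (K2 : set Hb) (A : operator Ha Hb) :
  lin_subspace K2 -> closed K2 -> (forall x, dom A x -> K2 (op A x)) ->
  boundedly_invertible (closure (dom A)) K2 A ->
  boundedly_invertible K2 (closure (dom A)) (adjoint ipa ipb (closure (dom A)) K2 A).
Proof.
move=> sK2 cK2 AK2 [S [_ S_lin [c [c0 S_bd]] AS SA]].
have [S' [S'K2 S'adj S'_lin S'_bd]] := bounded_adjoint sK2 cK2 c0 S_lin S_bd.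
exists S'; split => //; first by exists c.
- move=> g Ag; apply: adjoint_char => // x Ax.
  by rewrite S'adj ?SA //; apply: AK2.
- move=> f /adjoint_spec [K2f _ hf].
  apply: (closure_ipr_inj hipb (D := K2)); try exact: subset_closure.
  move=> u K2u; have [SuA ASu] := AS u K2u.
  by rewrite S'adj // -hf // ASu.
Qed.

End Adjoint.

(** * The closure of an operator *)

Section Graph.
Variable R : realType.
Local Notation C := R[i].
Variables (H1 H2 : completeNormedModType C) (T : operator H1 H2).
Hypothesis hT : linear_operator T.
Local Notation cG := (closure (graph T)).

Lemma dom_lin_subspace : lin_subspace (dom T).
Proof. by case: hT. Qed.

Lemma op_lin a x y : dom T x -> dom T y -> op T (a *: x + y) = a *: op T x + op T y.
Proof. by case: hT => _ _; apply. Qed.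

Lemma op0 : op T 0 = 0.
Proof.
have D0 := lin_subspace0 dom_lin_subspace.
by have := op_lin (-1) D0 D0; rewrite scaler0 addr0 scaleN1r addNr.
Qed.

Lemma opB x y : dom T x -> dom T y -> op T (x - y) = op T x - op T y.
Proof. by move=> Dx Dy; rewrite addrC -scaleN1r op_lin // scaleN1r addrC. Qed.

Lemma image_lin_subspace : lin_subspace (op T @` dom T).
Proof.
split; first by exists 0; [exact: lin_subspace0 dom_lin_subspace | exact: op0].
move=> a _ _ [x1 D1 <-] [x2 D2 <-]; exists (a *: x1 + x2); last exact: op_lin.
by case: dom_lin_subspace => _; apply.
Qed.

Lemma closure_graph_lin_subspace : lin_subspace cG.
Proof.
apply: closure_lin_subspace; split.
  by split => /=; [exact: lin_subspace0 dom_lin_subspace | rewrite op0].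
move=> a [x1 y1] [x2 y2] [/= D1 ->] [/= D2 ->]; split; last by rewrite /= op_lin.
by case: dom_lin_subspace => _; apply.
Qed.

Lemma closure_graph_op x : dom T x -> cG (x, op T x).
Proof. by move=> Dx; apply: subset_closure. Qed.

Lemma op_closure_graph x : dom (op_closure T) x -> cG (x, op (op_closure T) x).
Proof. by move=> ex; apply: (xgetPex 0 ex). Qed.

Lemma op_closure_char x y : closable T -> cG (x, y) ->
  dom (op_closure T) x /\ op (op_closure T) x = y.
Proof.
move=> cl xy; have Dx : dom (op_closure T) x by exists y.
split=> //; apply/eqP; rewrite -subr_eq0; apply/eqP/cl.
have := lin_subspaceB closure_graph_lin_subspace (op_closure_graph Dx) xy.
by rewrite -[(x, _) - _]/(x - x, _ - _) subrr.
Qed.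

Lemma closure_graph_surj (c : C) g : 0 <= c ->
  (forall x y, cG (x, y) -> `|x| <= c * `|y|) ->
  closure (op T @` dom T) g -> exists x, cG (x, g).
Proof.
move=> c0 bd /closure_normP rg.
have [k k0 ck] := gtC0_real (ltr_pwDr ltr01 c0).
have bdk x y : cG (x, y) -> `|x| <= k%:C%C * `|y|.
  by move=> /bd /le_trans; apply; rewrite -ck ler_wpM2r // lerDl.
pose A (r : R) := [set x | dom T x /\ `|op T x - g| < r%:C%C].
have Ane r : 0 < r -> A r !=set0.
  by rewrite -ltcR => /rg [_ [x Dx <-] h]; exists x; split => //; rewrite distrC.
have [p hp] : exists p, forall eps : C, 0 < eps -> exists2 r, 0 < r &
    forall u, A r u -> `|p - u| < eps.
  apply: (nested_family_limit Ane).
    move=> r s r0 rs x; rewrite /A /= => -[Dx h].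
    by split => //; apply: lt_le_trans h _; rewrite lecR.
  move=> eps /gtC0_real [e e0 ->].
  exists (e / (2 * k)) => [|u v [Du hu] [Dv hv]]; first by rewrite divr_gt0 ?mulr_gt0.
  have huv : `|op T u - op T v| < (e / k)%:C%C.
    apply: le_lt_trans (ler_distD g _ _) _; rewrite (distrC g).
    have -> : e / k = e / (2 * k) + e / (2 * k) by field; rewrite gt_eqF.
    by rewrite rmorphD ltrD.
  have := bdk _ _ (closure_graph_op (lin_subspaceB dom_lin_subspace Du Dv)).
  move=> /le_lt_trans; apply; rewrite opB //.
  have -> : e%:C%C = k%:C%C * (e / k)%:C%C by rewrite -rmorphM mulrC divfK // gt_eqF.
  by rewrite ltr_pM2l ?ltcR.
exists p; apply/closure_prodP => _ /gtC0_real [e e0 ->].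
have [r r0 hr] : exists2 r, 0 < r & forall u, A r u -> `|p - u| < e%:C%C.
  by apply: hp; rewrite ltcR.
have [x [Dx hx]] : A (Num.min r e) !=set0 by apply: Ane; rewrite lt_min r0 e0.
exists (x, op T x) => //=; split.
  by apply: hr; split => //; apply: lt_le_trans hx _; rewrite lecR ge_min lexx.
by rewrite distrC; apply: lt_le_trans hx _; rewrite lecR ge_min lexx orbT.
Qed.

Lemma op_closure_boundedly_invertible (c : C) : closable T -> 0 <= c ->
  (forall x y, cG (x, y) -> `|x| <= c * `|y|) ->
  closure (op T @` dom T) = setT -> boundedly_invertible setT setT (op_closure T).
Proof.
move=> cl c0 bd dense_range.
have inj x1 x2 y : cG (x1, y) -> cG (x2, y) -> x1 = x2.
  move=> h1 h2; have := lin_subspaceB closure_graph_lin_subspace h1 h2.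
  rewrite -[(x1, _) - _]/(x1 - x2, _ - _) subrr => /bd.
  by rewrite normr0 mulr0 normr_le0 subr_eq0 => /eqP.
have surj g : exists x, cG (x, g).
  by apply: closure_graph_surj c0 bd _; rewrite dense_range.
have [S SP] := choice surj.
exists S; split => //.
- move=> a g h _ _; apply: inj (SP _) _.
  by case: closure_graph_lin_subspace => _ /(_ a _ _ (SP g) (SP h)).
- by exists c; split => // g _; apply: bd.
- by move=> g _; apply: op_closure_char.
- by move=> f Df; apply: inj (SP _) (op_closure_graph Df).
Qed.

End Graph.

Section Operator.
Variable R : realType.
Local Notation C := R[i].
Variables (H1 H2 : completeNormedModType C) (ip1 : H1 -> H1 -> C) (ip2 : H2 -> H2 -> C).
Hypotheses (hip1 : is_inner_product ip1) (hip2 : is_inner_product ip2).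
Variables (T : operator H1 H2) (hT : linear_operator T).
Local Notation cG := (closure (graph T)).

Lemma closure_graph_adjoint y z :
  (forall x, dom T x -> ip2 (op T x) y = ip1 x z) ->
  forall x v, cG (x, v) -> ip2 v y = ip1 x z.
Proof.
move=> hyz x v /closure_prodP cxv; apply/eqP; rewrite -subr_eq0; apply/eqP.
apply: (@norm_le_eps_eq0 _ _ (`|y| + `|z|)) => // e e0.
have [[a b] [/= Da ->] /= [ha hb]] := cxv e e0.
rewrite -[v](subrK (op T a)) -[x](subrK a) (ipDl hip2) (ipDl hip1) hyz //.
rewrite opprD addrA addrAC addrK mulrDr.
apply: le_trans (ler_normB _ _) _; apply: lerD.
  by apply: le_trans (cauchy_schwarz hip2 _ _) _; rewrite ler_wpM2r // ltW.
by apply: le_trans (cauchy_schwarz hip1 _ _) _; rewrite ler_wpM2r // ltW.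
Qed.

Lemma adjoint_op_closure : closable T ->
  adjoint ip1 ip2 setT setT (op_closure T) = Tstar ip1 ip2 T.
Proof.
move=> cl; apply: eq_adjoint => y z; split => h x Dx.
  by have [Dbx <-] := op_closure_char hT cl (closure_graph_op Dx); apply: h.
exact: closure_graph_adjoint h _ _ (op_closure_graph Dx).
Qed.

Lemma Tstar_boundedly_invertible_of_closure : densely_defined T -> closable T ->
  boundedly_invertible setT setT (op_closure T) ->
  boundedly_invertible setT setT (Tstar ip1 ip2 T).
Proof.
move=> dd cl.
have Edom : closure (dom (op_closure T)) = setT.
  apply/seteqP; split => // x _; apply: (closureS (A := dom T)); last by rewrite dd.
  by move=> {}x Dx; case: (op_closure_char hT cl (closure_graph_op Dx)).
have := @adjoint_boundedly_invertible _ _ _ _ _ hip1 hip2 setT (op_closure T).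
by rewrite Edom adjoint_op_closure //; apply.
Qed.

Lemma closure_graph_norm_le : boundedly_invertible setT setT (Tstar ip1 ip2 T) ->
  exists2 c : C, 0 <= c & forall x y, cG (x, y) -> `|x| <= c * `|y|.
Proof.
move=> [S [_ _ [c [c0 S_bd]] TS _]]; exists c => // x y xy.
have [/adjoint_spec [_ _ hS] TSx] := TS x I; rewrite TSx in hS.
have e : `|x| ^+ 2 = `|ip2 y (S x)|.
  by rewrite (closure_graph_adjoint hS xy) (ipxx hip1) ger0_norm // exprn_ge0.
apply: le_of_sqr_le_mul; rewrite ?mulr_ge0 // e.
apply: le_trans (cauchy_schwarz hip2 _ _) _.
by rewrite mulrC mulrAC ler_wpM2r // S_bd.
Qed.

Lemma dense_range_of_Tstar : densely_defined T ->
  boundedly_invertible setT setT (Tstar ip1 ip2 T) -> closure (op T @` dom T) = setT.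
Proof.
move=> dd [S [_ _ [c [c0 S_bd]] _ STS]]; apply/seteqP; split => // g _.
have [p rp hp] := orthogonal_projection hip2 g
  (closure_lin_subspace (image_lin_subspace hT)) (@closed_closure _ _).
(* g - p is orthogonal to the range of T, so it lies in the kernel of T^* *)
have [Dgp Tgp] : dom (Tstar ip1 ip2 T) (g - p) /\ op (Tstar ip1 ip2 T) (g - p) = 0.
  rewrite /Tstar -dd; apply: adjoint_char => //; first by rewrite dd.
  move=> x Dx; rewrite (ip0r hip1) (ipC hip2) hp ?conjC0 //.
  by apply: subset_closure; exists x.
have S0 : S 0 = 0.
  by apply/eqP; rewrite -normr_le0; apply: le_trans (S_bd _ I) _; rewrite normr0 mulr0.
by have := STS _ Dgp; rewrite Tgp S0 => /eqP; rewrite eq_sym subr_eq0 => /eqP ->.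
Qed.

End Operator.

(** * T^x and T^xx *)

Section Biadjoint.
Variable R : realType.
Local Notation C := R[i].
Variables (H1 H2 : completeNormedModType C) (ip1 : H1 -> H1 -> C) (ip2 : H2 -> H2 -> C).
Hypotheses (hip1 : is_inner_product ip1) (hip2 : is_inner_product ip2).
Variables (T : operator H1 H2) (hT : linear_operator T).
Local Notation TX := (Tx ip1 ip2 T).
Local Notation TXX := (Txx ip1 ip2 T).

Lemma HT_lin_subspace : lin_subspace (HT T).
Proof. exact/closure_lin_subspace/dom_lin_subspace. Qed.

Lemma HTx_lin_subspace : lin_subspace (HT TX).
Proof.
apply: closure_lin_subspace.
exact: (adjoint_dom_lin_subspace hip1 hip2 T HT_lin_subspace (lin_subspaceT H2)).
Qed.

Lemma Txx_proj x : dom T x ->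
  dom TXX x /\ forall y, HT TX y -> ip2 (op T x) y = ip2 (op TXX x) y.
Proof.
move=> Dx; have [p KXp hp] :=
  orthogonal_projection hip2 (op T x) HTx_lin_subspace (@closed_closure _ _).
(* T x - p is orthogonal to D(T^x), hence T^xx x = p *)
have [DXXx ->] : dom TXX x /\ op TXX x = p.
  apply: (@adjoint_char _ _ _ _ _ hip2 (HT T) TX x p (subset_closure Dx) KXp) => y Dy.
  have [_ _ hy] := adjoint_spec Dy.
  rewrite (ipC hip1) -hy // -(ipC hip2) -[op T x](subrK p) (ipDr hip2).
  by rewrite (ipC hip2 y) hp ?conjC0 ?add0r //; apply: subset_closure.
by split => // y KXy; rewrite -[op T x](subrK p) (ipDl hip2) hp // add0r.
Qed.

Lemma Txx_boundedly_invertible_of_Tx :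
  boundedly_invertible (HT TX) (HT T) TX -> boundedly_invertible (HT T) (HT TX) TXX.
Proof.
apply: (@adjoint_boundedly_invertible _ _ _ _ _ hip2 hip1 (HT T) TX HT_lin_subspace).
  exact: closed_closure.
by move=> y /adjoint_spec [].
Qed.

Lemma Tx_boundedly_invertible_of_Txx :
  boundedly_invertible (HT T) (HT TX) TXX -> boundedly_invertible (HT TX) (HT T) TX.
Proof.
move=> [S' [_ S'_lin [c [c0 S'_bd]] TS' S'T]].
have [S [SKX Sadj S_lin S_bd]] :=
  bounded_adjoint hip1 hip2 HTx_lin_subspace (@closed_closure _ _) c0 S'_lin S'_bd.
exists S; split => //; first by exists c.
- move=> g KTg; apply: (@adjoint_char _ _ _ _ _ hip1 setT T (S g) g I KTg) => x Dx.
  have [DXXx hx] := Txx_proj Dx; have [_ KXx _] := adjoint_spec DXXx.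
  by rewrite hx // Sadj // S'T.
- move=> f Df; have [_ KTf hf] := adjoint_spec Df.
  apply: (closure_ipr_inj hip2 (D := HT TX)) => [||z KXz].
  + exact/subset_closure/SKX.
  + exact/subset_closure/subset_closure.
  have [DXXz TXXz] := TS' z KXz; have [_ _ hz] := adjoint_spec DXXz.
  by rewrite Sadj // (ipC hip1) hz // TXXz -(ipC hip2).
Qed.

End Biadjoint.

Unset Implicit Arguments.
Set Strict Implicit.

Theorem proposition3p13 (R : realType) (H1 H2 : completeNormedModType R[i])
    (ip1 : H1 -> H1 -> R[i]) (ip2 : H2 -> H2 -> R[i])
    (hip1 : is_inner_product ip1) (hip2 : is_inner_product ip2)
    (T : operator H1 H2) (hT : linear_operator T) :
  (boundedly_invertible (HT (Tx ip1 ip2 T)) (HT T) (Tx ip1 ip2 T) <->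
   boundedly_invertible (HT T) (HT (Tx ip1 ip2 T)) (Txx ip1 ip2 T)) /\
  (densely_defined T -> closable T ->
   (boundedly_invertible setT setT (Tstar ip1 ip2 T) <->
    boundedly_invertible setT setT (op_closure T))).
Proof.
split.
  split; [exact: Txx_boundedly_invertible_of_Tx | exact: Tx_boundedly_invertible_of_Txx].
move=> dd cl; split; last exact: Tstar_boundedly_invertible_of_closure.
move=> inv; have [c c0 bd] := closure_graph_norm_le hip1 hip2 inv.
apply: (op_closure_boundedly_invertible hT cl c0 bd).
exact (dense_range_of_Tstar hip1 hip2 hT dd inv).
Qed.
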